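(* Let $f\in\mathbb{R}[x]$ be a polynomial of degree $n$ with $n$ simple roots, and let $g\in\mathbb{R}[x]$ have degree $<n$ and satisfy $g(\xi)>0$ at every real root $\xi$ of $f$. Then there exists a pair $(Q,q)$ with $Q\in\mathbb{R}^{n\times n}$ symmetric positive definite and $q\in\mathbb{R}[x]$ of degree $\le n-2$ such that $g=\mathbf{x}^TQ\,\mathbf{x}+q\,f$. In particular $Q$ lies in the interior of the cone of $n\times n$ real symmetric positive semidefinite matrices.
   Context: $\mathbf{x}=[1,x,\dots,x^{n-1}]^T$ denotes the column vector of monomials of degree $<n$. *)

From Stdlib Require Import Rdefinitions.
From HB Require Import structures.
From mathcomp Require Import all_boot all_order all_algebra.
From mathcomp Require Import Rstruct.
From mathcomp.real_closed Require Import complex.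
Set Implicit Arguments. Unset Strict Implicit. Unset Printing Implicit Defensive.
Import Order.TTheory GRing.Theory Num.Theory.
Local Open Scope ring_scope.

Definition has_n_simple_roots (n : nat) (f : {poly R}) : Prop :=
  exists s : seq (complex R),
    [/\ uniq s, size s = n &
        forall z, z \in s -> root (map_poly (real_complex R) f) z].

Definition monvec (n : nat) : 'cV[{poly R}]_n := \col_(i < n) 'X^i.

Definition quadform_poly (n : nat) (Q : 'M[R]_n) : {poly R} :=
  ((monvec n)^T *m map_mx polyC Q *m monvec n) 0 0.

Definition symmetric_mx (n : nat) (Q : 'M[R]_n) : Prop := Q^T = Q.

Definition posdef_mx (n : nat) (Q : 'M[R]_n) : Prop :=
  symmetric_mx Q /\
  forall v : 'cV[R]_n, v != 0 -> 0 < (v^T *m Q *m v) 0 0.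

From Stdlib Require Import Rdefinitions.
From HB Require Import structures.
From mathcomp Require Import all_boot all_order all_algebra.
From mathcomp Require Import Rstruct.
From mathcomp.real_closed Require Import complex.
From mathcomp Require Import ring lra zify.
Set Implicit Arguments.
Unset Strict Implicit.
Unset Printing Implicit Defensive.
Import Order.TTheory GRing.Theory Num.Theory.
Local Open Scope ring_scope.

(* Let z_0, ..., z_(n-1) be the complex roots of f and W the inverse of their
   Vandermonde matrix: row k of W holds the coefficients of the Lagrange
   polynomial l_k, with l_k(z_j) = [k = j].  Conjugation permutes the roots,
   z_(m j) = conj z_j, hence conj l_k = l_(m k).  The complex matrix
   sum_k (c_k l_k l_k^T + t_k l_k (conj l_k)^T) gives the quadratic polynomial
   whose value at z_j is c_j + t_j [m j = j], so for c_j = g(z_j) - t_j [m j = j]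
   its real part Q satisfies x^T Q x = g at every root of f, i.e. f divides
   g - x^T Q x.  For real v, v^T Q v = sum_k Re (c_k y_k^2 + t_k |y_k|^2) with
   y = W v, and each summand is positive definite in y_k once |c_k| < t_k;
   t_k = 1 + |g(z_k)|^2 works, using g(z_k) > 0 when z_k is real. *)

Local Notation C := (complex R).
Local Notation rc := (real_complex R).
Local Notation pC p := (map_poly rc p).
Local Notation ReC := complex.Re.
Local Notation ImC := complex.Im.

Lemma conjc_horner_real_poly (p : {poly R}) (z : C) :
  conjc (pC p).[z] = (pC p).[conjc z].
Proof.
have conj_pC : map_poly conjc (pC p) = pC p.
  by rewrite -map_poly_comp; apply: (eq_map_poly _ p) => x /=; rewrite oppr0.
by rewrite -horner_map /= conj_pC.
Qed.

Lemma ReD (x y : C) : ReC (x + y) = ReC x + ReC y.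
Proof. by case: x => a b; case: y. Qed.

Lemma Re_sum I (r : seq I) (F : I -> C) :
  ReC (\sum_(i <- r) F i) = \sum_(i <- r) ReC (F i).
Proof. by elim: r => [|x r IH]; rewrite ?big_nil ?big_cons ?ReD ?IH. Qed.

Lemma conjc_rc (x : R) : conjc (rc x) = rc x.
Proof. by rewrite /= oppr0. Qed.

Lemma conjc_fixed_real (w : C) : conjc w = w -> w = rc (ReC w).
Proof. by case: w => a b [] /= hb; congr Complex; lra. Qed.

Lemma Re_hermitian_gt0 (c y : C) (t : R) :
  0 < t -> ReC c ^+ 2 + ImC c ^+ 2 < t ^+ 2 -> y != 0 ->
  0 < ReC (c * y * y + rc t * y * conjc y).
Proof.
case: c => a b; case: y => p q /= t_gt0 ct y_neq0.
have pq_gt0 : 0 < p ^+ 2 + q ^+ 2.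
  rewrite lt0r paddr_eq0 ?sqr_ge0 // !sqrf_eq0 addr_ge0 ?sqr_ge0 // andbT.
  by apply: contraNN y_neq0 => /andP[/eqP-> /eqP->].
(* [2 t Re (c y^2 + t |y|^2) = |t y + conj c conj y|^2 + (t^2 - |c|^2) |y|^2] *)
have := @sqr_ge0 R (t * p + a * p - b * q); have := @sqr_ge0 R (t * q - a * q - b * p).
nra.
Qed.

Lemma Re_hermitian_ge0 (c y : C) (t : R) :
  0 < t -> ReC c ^+ 2 + ImC c ^+ 2 < t ^+ 2 ->
  0 <= ReC (c * y * y + rc t * y * conjc y).
Proof.
move=> t_gt0 ct; have [->|y_neq0] := eqVneq y 0; first by rewrite !(mulr0, mul0r, addr0) /=.
exact/ltW/Re_hermitian_gt0.
Qed.

Lemma shifted_weight_lt (w : C) (b : bool) :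
  (b -> exists2 x, 0 < x & w = rc x) ->
  ReC (w - rc (1 + ReC w ^+ 2 + ImC w ^+ 2) * b%:R) ^+ 2
  + ImC (w - rc (1 + ReC w ^+ 2 + ImC w ^+ 2) * b%:R) ^+ 2
  < (1 + ReC w ^+ 2 + ImC w ^+ 2) ^+ 2.
Proof.
case: b => [/(_ isT) [x x_gt0 ->]|_] /=.
  rewrite !(mulr1, mulr0, subr0, oppr0, addr0, expr0n) /=.
  have := sqr_ge0 x; nra.
rewrite !(mulr0, subr0, addr0).
have := sqr_ge0 (ReC w); have := sqr_ge0 (ImC w); nra.
Qed.

Lemma horner_quadform_poly n (Q : 'M[R]_n) (w : C) :
  (pC (quadform_poly Q)).[w] = \sum_a \sum_b rc (Q a b) * w ^+ a * w ^+ b.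
Proof.
rewrite /quadform_poly !mxE rmorph_sum horner_sum exchange_big /=.
apply: eq_bigr => b _; rewrite !mxE rmorphM rmorph_sum /= hornerM horner_sum mulr_suml.
apply: eq_bigr => a _; rewrite !mxE rmorphM /= hornerM !map_polyXn map_polyC /=.
by rewrite !hornerXn hornerC [w ^+ a * _]mulrC.
Qed.

Lemma size_quadform_poly n (Q : 'M[R]_n) : (size (quadform_poly Q) <= (n + n).-1)%N.
Proof.
rewrite /quadform_poly !mxE; apply/leq_sizeP => k k_ge; rewrite coef_sum big1 // => b _.
rewrite !mxE coefMXn; case: ifP => // _; rewrite coef_sum big1 // => a _.
rewrite !mxE coefXnM; case: ifP => // _; rewrite coefC.
have := ltn_ord a; have := ltn_ord b; case: eqP => //; lia.
Qed.

Lemma conj_index n (s : seq C) :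
  size s = n -> {in s, forall w, conjc w \in s} ->
  exists m : 'I_n -> 'I_n, forall j, s`_(m j) = conjc s`_j.
Proof.
move=> <- s_conj; have conj_lt (j : 'I_(size s)) : (index (conjc (nth 0%R s j)) s < size s)%N.
  by rewrite index_mem s_conj // mem_nth.
by exists (fun j => Ordinal (conj_lt j)) => j; rewrite nth_index // s_conj // mem_nth.
Qed.

Section SimpleRoots.

Variables (f : {poly R}) (s : seq C).
Hypotheses (f_neq0 : f != 0) (s_uniq : uniq s) (size_s : size s = (size f).-1)
  (s_roots : all (root (pC f)) s).

Lemma prod_XsubC_eqp : \prod_(w <- s) ('X - w%:P) %= pC f.
Proof.
rewrite -dvdp_size_eqp ?size_prod_XsubC ?size_map_poly ?size_s ?prednK ?size_poly_gt0 //.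
by apply: uniq_roots_dvdp; rewrite ?uniq_rootsE.
Qed.

Lemma root_pC_simple w : root (pC f) w = (w \in s).
Proof. by rewrite -(eqp_root prod_XsubC_eqp) root_prod_XsubC. Qed.

Lemma dvdp_simple_roots (p : {poly R}) : {in s, forall w, root (pC p) w} -> f %| p.
Proof.
move=> p_roots; rewrite -(dvdp_map rc) -(eqp_dvdl _ prod_XsubC_eqp).
by apply: uniq_roots_dvdp; [apply/allP | rewrite uniq_rootsE].
Qed.

End SimpleRoots.

Lemma simple_roots_enum n (f : {poly R}) :
  size f = n.+1 -> has_n_simple_roots n f ->
  exists (z : 'I_n -> C) (m : 'I_n -> 'I_n),
    [/\ injective z, forall j, z (m j) = conjc (z j), forall j, root (pC f) (z j)
       & forall p : {poly R}, (forall j, root (pC p) (z j)) -> f %| p].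
Proof.
move=> size_f [s [s_uniq size_s s_roots]].
have f_neq0 : f != 0 by rewrite -size_poly_eq0 size_f.
have size_s_f : size s = (size f).-1 by rewrite size_f.
have s_rootsb : all (root (pC f)) s by apply/allP.
have [m s_conj] : exists m : 'I_n -> 'I_n, forall j, s`_(m j) = conjc s`_j.
  apply: conj_index size_s _ => w ws.
  rewrite -(root_pC_simple f_neq0 s_uniq size_s_f s_rootsb) /root.
  by rewrite -conjc_horner_real_poly (rootP (s_roots w ws)) rmorph0.
have z_in (j : 'I_n) : s`_j \in s by rewrite mem_nth ?size_s.
exists (fun j => s`_j), m; split => // [i j /eqP|j|p p_roots].
- by rewrite nth_uniq ?size_s // => /eqP/val_inj.
- exact: s_roots.
apply: (dvdp_simple_roots f_neq0 s_uniq size_s_f s_rootsb) => w /(nthP 0) [i i_lt <-].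
by rewrite size_s in i_lt; apply: (p_roots (Ordinal i_lt)).
Qed.

Lemma conj_fixed_root (p : {poly R}) (w : C) :
  conjc w = w -> root (pC p) w -> exists2 a, root p a & w = rc a.
Proof.
move=> /conjc_fixed_real w_real; rewrite w_real fmorph_root => pa.
by exists (ReC w).
Qed.

Lemma size_divp_leq (p f : {poly R}) n :
  size f = n.+1 -> (size p <= (n + n).-1)%N -> (size (p %/ f)%R <= n.-1)%N.
Proof.
move=> size_f; rewrite size_divp -?size_poly_eq0 ?size_f //.
by move: (size p) => k; lia.
Qed.

Lemma Re_mx_form n (X : 'M[C]_n) (u : 'I_n -> C) :
  \sum_a \sum_b rc (ReC (X a b)) * u a * u b =
  (\sum_a \sum_b X a b * u a * u b
   + conjc (\sum_a \sum_b X a b * conjc (u a) * conjc (u b))) / 2%:R.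
Proof.
rewrite rmorph_sum mulrDl !mulr_suml -big_split; apply: eq_bigr => a _ /=.
rewrite rmorph_sum !mulr_suml -big_split; apply: eq_bigr => b _ /=.
by rewrite ReJ_add !rmorphM /= !conjcK; field.
Qed.

Lemma real_mx_form n (Q : 'M[R]_n) (v : 'cV[R]_n) :
  rc ((v^T *m Q *m v) 0 0) = \sum_a \sum_b rc (Q a b) * rc (v a 0) * rc (v b 0).
Proof.
rewrite mxE rmorph_sum exchange_big; apply: eq_bigr => b _.
rewrite mxE rmorphM rmorph_sum mulr_suml; apply: eq_bigr => a _.
by rewrite !mxE !rmorphM /=; ring.
Qed.

Section RealGram.

Variables (n : nat) (W : 'M[C]_n) (c : 'I_n -> C) (t : 'I_n -> R).

Definition gram_mx : 'M[C]_n :=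
  \matrix_(a, b) \sum_k (c k * W k a * W k b + rc (t k) * W k a * conjc (W k b)).

Definition real_gram_mx : 'M[R]_n := map_mx (@complex.Re R) gram_mx.

Lemma gram_mx_form (u : 'I_n -> C) :
  \sum_a \sum_b gram_mx a b * u a * u b =
  \sum_k (c k * (\sum_a W k a * u a) * (\sum_a W k a * u a)
          + rc (t k) * (\sum_a W k a * u a) * (\sum_a conjc (W k a) * u a)).
Proof.
under eq_bigr => a _ do (under eq_bigr => b _ do rewrite mxE !mulr_suml; rewrite exchange_big).
rewrite exchange_big; apply: eq_bigr => k _.
rewrite -!mulrA !mulr_suml !mulr_sumr -big_split /=; apply: eq_bigr => a _.
rewrite !mulr_sumr -big_split; apply: eq_bigr => b _ /=.
ring.
Qed.

Lemma real_gram_mx_sym : symmetric_mx real_gram_mx.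
Proof.
apply/matrixP => a b; rewrite !mxE !Re_sum; apply: eq_bigr => k _.
by case: (c k) => ? ?; case: (W k a) => ? ?; case: (W k b) => ? ? /=; ring.
Qed.

Lemma real_gram_mx_posdef :
  W \in unitmx -> (forall k, 0 < t k) ->
  (forall k, ReC (c k) ^+ 2 + ImC (c k) ^+ 2 < t k ^+ 2) ->
  posdef_mx real_gram_mx.
Proof.
move=> W_unit t_gt0 ct; split; first exact: real_gram_mx_sym.
move=> v v_neq0; pose u a := rc (v a 0); pose y k := \sum_a W k a * u a.
have formE : (v^T *m real_gram_mx *m v) 0 0
             = \sum_k ReC (c k * y k * y k + rc (t k) * y k * conjc (y k)).
  have -> : \sum_k ReC (c k * y k * y k + rc (t k) * y k * conjc (y k))
            = ReC (\sum_a \sum_b gram_mx a b * u a * u b).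
    rewrite gram_mx_form Re_sum; apply: eq_bigr => k _.
    rewrite /y rmorph_sum; congr (ReC (_ + _ * _)); apply: eq_bigr => a _.
    by rewrite rmorphM; congr (_ * _); apply: conjc_rc.
  apply: complexI; rewrite real_mx_form ReJ_add.
  under eq_bigr => a _ do under eq_bigr => b _ do rewrite mxE.
  rewrite Re_mx_form; congr ((_ + conjc _) / _).
  by apply: eq_bigr => a _; apply: eq_bigr => b _; rewrite /u !conjc_rc.
have [k0 yk0_neq0] : exists k, y k != 0.
  apply/existsP; apply: contra_neqT v_neq0 => /existsPn y0.
  have Wv0 : W *m map_mx rc v = 0.
    apply/matrixP => k i; rewrite ord1 !mxE -[RHS](eqP (negbNE (y0 k))).
    by apply: eq_bigr => a _; rewrite mxE.
  by apply/eqP; rewrite -(map_mx_eq0 rc) -[map_mx rc v](mulKmx W_unit) Wv0 mulmx0.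
rewrite formE (bigD1 k0) //= ltr_pwDl ?Re_hermitian_gt0 //.
by apply: sumr_ge0 => k _; apply: Re_hermitian_ge0.
Qed.

End RealGram.

Section LagrangeBasis.

Variables (n : nat) (z : 'I_n -> C).
Hypothesis z_inj : injective z.

Definition lagrange_mx : 'M[C]_n := invmx (Vandermonde n (\row_j z j)).

Lemma Vandermonde_unit : Vandermonde n (\row_j z j) \in unitmx.
Proof.
rewrite unitmxE det_Vandermonde unitfE; apply/prodf_neq0 => i _.
apply/prodf_neq0 => j ij; rewrite !mxE subr_eq0; apply/eqP => /z_inj ji.
by rewrite ji ltnn in ij.
Qed.

Lemma lagrange_mx_unit : lagrange_mx \in unitmx.
Proof. by rewrite unitmx_inv Vandermonde_unit. Qed.

Lemma lagrange_mx_eval j k : \sum_a lagrange_mx k a * z j ^+ a = (k == j)%:R.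
Proof.
have := congr1 (fun M : 'M[C]_n => M k j) (mulVmx Vandermonde_unit).
by rewrite !mxE => <-; apply: eq_bigr => a _; rewrite !mxE.
Qed.

Variable m : 'I_n -> 'I_n.
Hypothesis z_conj : forall j, z (m j) = conjc (z j).

Lemma lagrange_mx_conj_eval j k :
  \sum_a conjc (lagrange_mx k a) * z j ^+ a = (k == m j)%:R.
Proof.
rewrite (_ : \sum_a _ = conjc (\sum_a lagrange_mx k a * z (m j) ^+ a)).
  by rewrite lagrange_mx_eval conjc_nat.
by rewrite rmorph_sum; apply: eq_bigr => a _; rewrite rmorphM rmorphXn /= z_conj conjcK.
Qed.

Variables (c h : 'I_n -> C) (t : 'I_n -> R).
Hypotheses (h_conj : forall j, conjc (h (m j)) = h j)
  (c_shift : forall j, c j + rc (t j) * (m j == j)%:R = h j).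

Lemma gram_mx_form_root j :
  \sum_a \sum_b gram_mx lagrange_mx c t a b * z j ^+ a * z j ^+ b = h j.
Proof.
rewrite gram_mx_form.
under eq_bigr => k _ do rewrite !lagrange_mx_eval lagrange_mx_conj_eval.
rewrite (bigD1 j) //= big1 => [|k kj]; last by rewrite (negbTE kj) !(mulr0, mul0r, add0r).
by rewrite eqxx !mulr1 addr0 eq_sym c_shift.
Qed.

Lemma horner_real_gram_root j :
  (pC (quadform_poly (real_gram_mx lagrange_mx c t))).[z j] = h j.
Proof.
rewrite horner_quadform_poly.
under eq_bigr => a _ do under eq_bigr => b _ do rewrite mxE.
rewrite Re_mx_form gram_mx_form_root.
have conj_zX a : conjc (z j ^+ a) = z (m j) ^+ a by rewrite rmorphXn /= z_conj.
under eq_bigr => a _ do under eq_bigr => b _ do rewrite !conj_zX.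
by rewrite gram_mx_form_root h_conj; field.
Qed.

End LagrangeBasis.

Theorem mainTheorem3 (n : nat) (f g : {poly R}) :
  size f = n.+1 ->
  has_n_simple_roots n f ->
  (size g <= n)%N ->
  (forall xi : R, root f xi -> 0 < g.[xi]) ->
  exists (Q : 'M[R]_n) (q : {poly R}),
    [/\ posdef_mx Q, (size q <= n.-1)%N & g = quadform_poly Q + q * f].
Proof.
move=> size_f /(simple_roots_enum size_f) [z [m [z_inj z_conj z_root f_dvd]]] size_g g_pos.
pose h j := (pC g).[z j]; pose t j := 1 + ReC (h j) ^+ 2 + ImC (h j) ^+ 2.
pose c j := h j - rc (t j) * (m j == j)%:R.
have h_conj j : conjc (h (m j)) = h j by rewrite /h z_conj conjc_horner_real_poly conjcK.
pose Q := real_gram_mx (lagrange_mx z) c t.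
have Q_posdef : posdef_mx Q.
  apply: real_gram_mx_posdef (lagrange_mx_unit z_inj) _ _ => k.
    by have := sqr_ge0 (ReC (h k)); have := sqr_ge0 (ImC (h k)); rewrite /t; lra.
  apply: shifted_weight_lt => /eqP mk.
  have [a fa zk] := conj_fixed_root (etrans (esym (z_conj k)) (congr1 z mk)) (z_root k).
  by exists g.[a]; rewrite ?g_pos // /h zk horner_map.
have Q_roots j : (pC (quadform_poly Q)).[z j] = h j.
  exact: (horner_real_gram_root z_inj z_conj (t := t) h_conj (fun j => subrK _ _) j).
exists Q, ((g - quadform_poly Q) %/ f); split => //.
  apply: size_divp_leq size_f _.
  rewrite (leq_trans (size_add _ _)) // size_opp geq_max size_quadform_poly andbT.
  by apply: leq_trans size_g _; lia.
have f_dvd_diff : f %| g - quadform_poly Q.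
  by apply: f_dvd => j; rewrite /root rmorphB hornerD hornerN Q_roots subrr.
by rewrite divpK // addrC subrK.
Qed.
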